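(* Let $G$ be a $\lambda$-graph and $Q$ a query over $G$. Then $Q^{\Downarrow}$ is an open bisimulation if and only if $Q^{\#}$ is a sharing equivalence.
   Context: A pre-$\lambda$-graph is a directed graph whose nodes are of four kinds: an application node $@(n_1,n_2)$ has exactly two children, its left child $n_1$ and its right child $n_2$; an abstraction node $\lambda(n)$ has exactly one child, its body $n$; a free variable node has no children and carries an atom $\mathrm{id}(n)$ from a fixed set of atoms, distinct free variable nodes carrying distinct atoms; a bound variable node $\mathrm{var}(l)$ has exactly one outgoing binding edge, to an abstraction node $l$ (its binder). A trace is a finite sequence of directions from $\{\swarrow,\downarrow,\searrow\}$; $\epsilon$ is the empty trace and $d\cdot\tau$ is the trace $\tau$ extended by one final step $d$. Paths $n\xrightarrow{\tau}m$ are defined inductively: $n\xrightarrow{\epsilon}n$; if $n\xrightarrow{\tau}\lambda(m)$ then $n\xrightarrow{\downarrow\cdot\tau}m$; if $n\xrightarrow{\tau}@(m_1,m_2)$ then $n\xrightarrow{\swarrow\cdot\tau}m_1$ and $n\xrightarrow{\searrow\cdot\tau}m_2$ (binding edges are never followed). The path $n\xrightarrow{\tau}$ crosses a node $m$ if either $n\xrightarrow{\tau}m$, or $\tau=d\cdot\tau'$ and $n\xrightarrow{\tau'}$ crosses $m$. A root is a node $r$ such that the only path ending in $r$ has the empty trace. A node $m$ dominates $n$ if every path from a root to $n$ crosses $m$. A $\lambda$-graph is a pre-$\lambda$-graph that has finitely many nodes, is acyclic ($n\xrightarrow{\tau}n$ holds only for $\tau=\epsilon$), and is dominated (every bound variable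 node $\mathrm{var}(l)$ is dominated by its binder $l$). Two nodes are homogeneous if both are application nodes, or both abstraction nodes, or both free variable nodes, or both bound variable nodes; a binary relation $R$ on nodes is homogeneous if it only relates homogeneous nodes. Rules: $(\swarrow)$: $@(n_1,n_2)\,R\,@(m_1,m_2)$ implies $n_1\,R\,m_1$; $(\searrow)$: $@(n_1,n_2)\,R\,@(m_1,m_2)$ implies $n_2\,R\,m_2$; $(\downarrow)$: $\lambda(n)\,R\,\lambda(m)$ implies $n\,R\,m$; $(\circlearrowright)$: $\mathrm{var}(n)\,R\,\mathrm{var}(m)$ implies $n\,R\,m$. $R$ is propagated if closed under $(\swarrow),(\downarrow),(\searrow)$. $R$ is open if $n\,R\,m$ implies $n=m$ for all free variable nodes $n,m$. A bisimulation is a homogeneous propagated relation closed also under $(\circlearrowright)$. A sharing equivalence is an open bisimulation that is an equivalence relation. $R^{\Downarrow}$ (propagation) is the smallest propagated relation containing $R$; $R^{\#}$ (spreading) is the smallest propagated equivalence relation containing $R$. A query over $G$ is a binary relation on the roots of $G$. *)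

From mathcomp Require Import all_boot.
From Stdlib Require Import List.

Set Implicit Arguments.
Unset Strict Implicit.
Unset Printing Implicit Defensive.

(* The label of a node: its kind and its outgoing edges.
   [App n1 n2]  : application node @(n1,n2)
   [Abs n]      : abstraction node lambda(n)
   [FVar a]     : free variable node with atom a
   [BVar l]     : bound variable node var(l), binding edge to l *)
Inductive node_kind (V A : Type) : Type :=
  | App of V & V
  | Abs of V
  | FVar of A
  | BVar of V.
Arguments App {V A}. Arguments Abs {V A}. Arguments FVar {V A}. Arguments BVar {V A}.

Definition graph (V A : Type) := V -> node_kind V A.

Section Defs.
Variables (V : finType) (A : Type) (G : graph V A).

Definition is_abs (n : V) : Prop := exists b, G n = Abs b.

Definition pre_lambda_graph : Prop :=
  (forall v l, G v = BVar l -> is_abs l) /\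
  (forall n m a b, G n = FVar a -> G m = FVar b -> a = b -> n = m).

Inductive dir := DSW | DDown | DSE.

(* traces: [d :: tau] is the trace tau extended by one final step d *)
Definition trace := list dir.

Inductive path : V -> trace -> V -> Prop :=
  | path_nil n : path n nil n
  | path_down n tau m b : path n tau m -> G m = Abs b -> path n (DDown :: tau) b
  | path_sw n tau m m1 m2 : path n tau m -> G m = App m1 m2 -> path n (DSW :: tau) m1
  | path_se n tau m m1 m2 : path n tau m -> G m = App m1 m2 -> path n (DSE :: tau) m2.

Inductive crosses : V -> trace -> V -> Prop :=
  | crosses_here n tau m : path n tau m -> crosses n tau m
  | crosses_before n d tau m : crosses n tau m -> crosses n (d :: tau) m.

Definition is_root (r : V) : Prop := forall n tau, path n tau r -> tau = nil.

Definition dominates (m n : V) : Prop :=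
  forall r tau, is_root r -> path r tau n -> crosses r tau m.

Definition acyclic : Prop := forall n tau, path n tau n -> tau = nil.

Definition dominated : Prop := forall v l, G v = BVar l -> dominates l v.

(* finiteness of nodes is given by V being a finType *)
Definition lambda_graph : Prop := pre_lambda_graph /\ acyclic /\ dominated.

Definition rel := V -> V -> Prop.

Definition homogeneous_nodes (n m : V) : Prop :=
  match G n, G m with
  | App _ _, App _ _ | Abs _, Abs _ | FVar _, FVar _ | BVar _, BVar _ => True
  | _, _ => False
  end.

Definition homogeneous (R : rel) : Prop := forall n m, R n m -> homogeneous_nodes n m.

Definition rule_sw (R : rel) : Prop :=
  forall v w n1 n2 m1 m2, G v = App n1 n2 -> G w = App m1 m2 -> R v w -> R n1 m1.
Definition rule_se (R : rel) : Prop :=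
  forall v w n1 n2 m1 m2, G v = App n1 n2 -> G w = App m1 m2 -> R v w -> R n2 m2.
Definition rule_down (R : rel) : Prop :=
  forall v w n m, G v = Abs n -> G w = Abs m -> R v w -> R n m.
Definition rule_bind (R : rel) : Prop :=
  forall v w n m, G v = BVar n -> G w = BVar m -> R v w -> R n m.

Definition propagated (R : rel) : Prop := rule_sw R /\ rule_down R /\ rule_se R.

Definition open_rel (R : rel) : Prop :=
  forall n m a b, G n = FVar a -> G m = FVar b -> R n m -> n = m.

Definition bisimulation (R : rel) : Prop :=
  homogeneous R /\ propagated R /\ rule_bind R.

Definition equivalence_rel (R : rel) : Prop :=
  (forall x, R x x) /\ (forall x y, R x y -> R y x) /\
  (forall x y z, R x y -> R y z -> R x z).

Definition sharing_equivalence (R : rel) : Prop :=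
  open_rel R /\ bisimulation R /\ equivalence_rel R.

Definition subrel (R S : rel) : Prop := forall x y, R x y -> S x y.

(* R^{Downarrow}: smallest propagated relation containing R *)
Definition propagation (R : rel) : rel :=
  fun x y => forall S : rel, subrel R S -> propagated S -> S x y.

(* R^{#}: smallest propagated equivalence relation containing R *)
Definition spreading (R : rel) : rel :=
  fun x y => forall S : rel, subrel R S -> propagated S -> equivalence_rel S -> S x y.

Definition query (Q : rel) : Prop := forall x y, Q x y -> is_root x /\ is_root y.

End Defs.

From Pilot Require Import Defs.
From mathcomp Require Import all_boot.
From Stdlib Require Import List Relation_Operators ClassicalEpsilon.

Set Implicit Arguments.
Unset Strict Implicit.
Unset Printing Implicit Defensive.

(* Both directions go through the local characterisation of open
   bisimulations: R is one iff every R-related pair (x, y) is [compatible],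
   i.e. x and y have the same kind, R-related children and binders, and are
   equal if they are free variables.
   (=>) Compatibility is preserved by equivalence closure, so the equivalence
   closure of Q^⇓ is a propagated equivalence containing Q; it is therefore
   Q^# itself, which inherits compatibility.
   (<=) Q^⇓ is contained in Q^#, which makes it homogeneous and open; the only
   real work is the binder rule.  Q^⇓ relates exactly the nodes reached by
   the same trace from Q-related roots, and dominance places the binders on
   these two paths.  If the binders sit at different depths, one binder is a
   proper descendant of a node Q^#-equivalent to it, which is impossible for
   a homogeneous propagated relation in a finite acyclic graph. *)

Section LambdaGraphs.
Variables (V : finType) (A : Type) (G : graph V A).

Definition compatible (R : V -> V -> Prop) (x y : V) : Prop :=
  match G x, G y with
  | App x1 x2, App y1 y2 => R x1 y1 /\ R x2 y2
  | Abs x1, Abs y1 => R x1 y1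
  | FVar _, FVar _ => x = y
  | BVar l, BVar k => R l k
  | _, _ => False
  end.

Lemma compatible_mono (R S : V -> V -> Prop) x y :
  Defs.subrel R S -> compatible R x y -> compatible S x y.
Proof.
move=> RS; rewrite /compatible.
case: (G x) => [? ?|?|?|?]; case: (G y) => [? ?|?|?|?] //.
all: try exact: RS.
by move=> [H1 H2]; split; apply: RS.
Qed.

Lemma open_bisimulationP (R : V -> V -> Prop) :
  open_rel G R /\ bisimulation G R <-> (forall x y, R x y -> compatible R x y).
Proof.
split=> [[Ho [Hh [[Hsw [Hd Hse]] Hb]]] x y Rxy | Hc].
- move: (Hh _ _ Rxy); rewrite /compatible /homogeneous_nodes.
  case Ex: (G x) => [x1 x2|x1|a|l]; case Ey: (G y) => [y1 y2|y1|b|k] // _.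
  + by split; [apply: Hsw Ex Ey Rxy | apply: Hse Ex Ey Rxy].
  + exact: Hd Ex Ey Rxy.
  + exact: Ho Ex Ey Rxy.
  + exact: Hb Ex Ey Rxy.
- have Hrule x y : R x y -> compatible R x y := Hc x y.
  split; [|split; [|split; [split; [|split]|]]].
  + by move=> n m a b Hn Hm /Hrule; rewrite /compatible Hn Hm.
  + move=> n m /Hrule; rewrite /compatible /homogeneous_nodes.
    by case: (G n) => [? ?|?|?|?]; case: (G m).
  + by move=> v w n1 n2 m1 m2 Hv Hw /Hrule; rewrite /compatible Hv Hw => -[].
  + by move=> v w n m Hv Hw /Hrule; rewrite /compatible Hv Hw.
  + by move=> v w n1 n2 m1 m2 Hv Hw /Hrule; rewrite /compatible Hv Hw => -[].
  + by move=> v w n m Hv Hw /Hrule; rewrite /compatible Hv Hw.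
Qed.

Notation eq_closure R := (clos_refl_sym_trans V R).

(* Compatibility of all pairs survives passing to the equivalence closure:
   the local condition is reflexive, symmetric and transitive in R. *)
Lemma compatible_eq_closure (R : V -> V -> Prop) :
  (forall x y, R x y -> compatible R x y) ->
  forall x y, eq_closure R x y -> compatible (eq_closure R) x y.
Proof.
move=> Hc x y; elim=> {x y} [x y /Hc | x | x y _ | x y z _ IH1 _ IH2].
- by apply: compatible_mono => ? ?; apply: rst_step.
- by rewrite /compatible; case: (G x) => [? ?|?|?|?] //; try split; apply: rst_refl.
- rewrite /compatible.
  case: (G x) => [? ?|?|?|?]; case: (G y) => [? ?|?|?|?] //.
  all: try exact: rst_sym.
  by move=> [H1 H2]; split; apply: rst_sym.
- move: IH1 IH2; rewrite /compatible.
  case: (G x) => [? ?|?|?|?]; case: (G y) => [? ?|?|?|?] //;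
    case: (G z) => [? ?|?|?|?] //.
  all: try exact: rst_trans.
  all: try by move=> -> ->.
  by move=> [H1 H2] [H3 H4]; split; [apply: rst_trans H1 H3 | apply: rst_trans H2 H4].
Qed.

Lemma propagation_propagated (Q : V -> V -> Prop) : propagated G (propagation G Q).
Proof.
split; [|split].
- move=> v w n1 n2 m1 m2 Hv Hw H S QS HS.
  by case: (HS) => Hsw _; apply: Hsw Hv Hw (H S QS HS).
- move=> v w n m Hv Hw H S QS HS.
  by case: (HS) => _ [Hd _]; apply: Hd Hv Hw (H S QS HS).
- move=> v w n1 n2 m1 m2 Hv Hw H S QS HS.
  by case: (HS) => _ [_ Hse]; apply: Hse Hv Hw (H S QS HS).
Qed.

Lemma propagation_sub_spreading (Q : V -> V -> Prop) :
  Defs.subrel (propagation G Q) (spreading G Q).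
Proof. by move=> x y H S QS HS _; apply: H. Qed.

Lemma spreading_equivalence (Q : V -> V -> Prop) : Defs.equivalence_rel (spreading G Q).
Proof.
split; [|split].
- by move=> x S _ _ [Hr _].
- move=> x y H S QS HS HE; case: (HE) => _ [Hs _].
  exact: Hs (H S QS HS HE).
- move=> x y z H1 H2 S QS HS HE; case: (HE) => _ [_ Ht].
  exact: Ht (H1 S QS HS HE) (H2 S QS HS HE).
Qed.

Lemma spreading_eq_closure (Q : V -> V -> Prop) :
  propagated G (eq_closure (propagation G Q)) ->
  forall x y, spreading G Q x y <-> eq_closure (propagation G Q) x y.
Proof.
move=> Hprop x y; split.
- move=> H; apply: H Hprop _.
  + by move=> a b Qab; apply: rst_step => S QS _; apply: QS.
  + by split; [apply: rst_refl | split; [apply: rst_sym | apply: rst_trans]].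
- have [Hr [Hs Ht]] := spreading_equivalence Q.
  elim=> {x y} [x y /propagation_sub_spreading | x | x y _ | x y z _ IH1 _ IH2] //.
  + exact: Hs.
  + exact: Ht IH1 IH2.
Qed.

(* Paths compose and decompose along concatenation of traces (recall that
   traces are stored last step first). *)
Lemma path_cat y t2 z :
  Defs.path G y t2 z -> forall x t1, Defs.path G x t1 y -> Defs.path G x (t2 ++ t1) z.
Proof.
elim=> //= [n tau m b _ IH Hm | n tau m m1 m2 _ IH Hm | n tau m m1 m2 _ IH Hm] x t1 H.
- exact: path_down (IH _ _ H) Hm.
- exact: path_sw (IH _ _ H) Hm.
- exact: path_se (IH _ _ H) Hm.
Qed.

Lemma path_split x t2 t1 z :
  Defs.path G x (t2 ++ t1) z -> exists y, Defs.path G x t1 y /\ Defs.path G y t2 z.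
Proof.
elim: t2 z => [|d t2 IH] z H; first by exists z; split=> //; constructor.
inversion H as [|? ? m ? Hm Em|? ? m ? ? Hm Em|? ? m ? ? Hm Em]; subst;
  have [y [Hxy Hym]] := IH _ Hm; exists y; split=> //.
- exact: path_down Hym Em.
- exact: path_sw Hym Em.
- exact: path_se Hym Em.
Qed.

Lemma path_nil_eq x y : Defs.path G x nil y -> x = y.
Proof. by move=> H; inversion H. Qed.

Lemma crosses_path r t n :
  crosses G r t n -> exists a t1, t = a ++ t1 /\ Defs.path G r t1 n.
Proof.
elim=> [{}n tau m H | {}n d tau m _ [a [t1 [-> H]]]]; first by exists nil, tau.
by exists (d :: a), t1.
Qed.

Lemma transfer_path (R : V -> V -> Prop) :
  homogeneous G R -> propagated G R ->
  forall x d z, Defs.path G x d z -> forall y, R x y -> exists w, Defs.path G y d w /\ R z w.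
Proof.
move=> Hh [Hsw [Hd Hse]] x d z; elim=> {x d z}.
- by move=> n y Rny; exists y; split=> //; constructor.
- move=> n tau m b _ IH Hm y /IH [w [Hw Rmw]].
  move: (Hh _ _ Rmw); rewrite /homogeneous_nodes Hm; case Ew: (G w) => [|c||] // _.
  by exists c; split; [apply: path_down Hw Ew | apply: Hd Hm Ew Rmw].
- move=> n tau m m1 m2 _ IH Hm y /IH [w [Hw Rmw]].
  move: (Hh _ _ Rmw); rewrite /homogeneous_nodes Hm; case Ew: (G w) => [c1 c2|||] // _.
  by exists c1; split; [apply: path_sw Hw Ew | apply: Hsw Hm Ew Rmw].
- move=> n tau m m1 m2 _ IH Hm y /IH [w [Hw Rmw]].
  move: (Hh _ _ Rmw); rewrite /homogeneous_nodes Hm; case Ew: (G w) => [c1 c2|||] // _.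
  by exists c2; split; [apply: path_se Hw Ew | apply: Hse Hm Ew Rmw].
Qed.

(* Classical boolean reflection of a proposition, used to form finite sets
   of nodes described by path conditions. *)
Definition holds (P : Prop) : bool :=
  if excluded_middle_informative P then true else false.

Lemma holdsP (P : Prop) : reflect P (holds P).
Proof. by rewrite /holds; case: excluded_middle_informative => H; constructor. Qed.

Definition descendants (x : V) : {set V} :=
  [set z | holds (exists d, d <> nil /\ Defs.path G x d z)].

Lemma descendants_proper x d y :
  acyclic G -> Defs.path G x d y -> d <> nil -> #|descendants y| < #|descendants x|.
Proof.
move=> Hac Hp Hd; apply: proper_card; apply/properP; split.
- apply/subsetP => z; rewrite !inE => /holdsP [d' [Hd' Hp']].
  apply/holdsP; exists (d' ++ d).
  by split; [case: d' Hd' {Hp'} | exact: path_cat Hp' _ _ Hp].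
- exists y; rewrite inE; first by apply/holdsP; exists d.
  by apply/holdsP => -[d' [Hd' /Hac]].
Qed.

(* In a finite acyclic graph, a homogeneous propagated relation never
   relates a node to one of its proper descendants: transporting the path
   along the relation would yield an infinite descending chain. *)
Lemma unrelated_descendant (R : V -> V -> Prop) x d y :
  acyclic G -> homogeneous G R -> propagated G R ->
  Defs.path G x d y -> R x y -> d = nil.
Proof.
move=> Hac Hh Hp; case: d => [//|e d] Hxy Rxy; exfalso.
have Hd : e :: d <> nil by [].
move: {2}#|descendants x| (leqnn #|descendants x|) => N HN.
elim: N x y HN Hxy Rxy => [|N IH] x y HN Hxy Rxy;
  have := leq_trans (descendants_proper Hac Hxy Hd) HN; rewrite ?ltn0 // ltnS => HyN.
have [w [Hyw Ryw]] := transfer_path Hh Hp Hxy Rxy.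
exact: IH HyN Hyw Ryw.
Qed.

Lemma propagationP (Q : V -> V -> Prop) x y :
  propagation G Q x y <-> exists r s t, Q r s /\ Defs.path G r t x /\ Defs.path G s t y.
Proof.
split=> [H | [r [s [t [Qrs [Hx Hy]]]]]].
- pose C u v := exists r s t, Q r s /\ Defs.path G r t u /\ Defs.path G s t v.
  apply: (H C) => [a b Qab | ]; first by exists a, b, nil; split=> //; split; constructor.
  split; [|split].
  + move=> v w n1 n2 m1 m2 Hv Hw [r [s [t [Qrs [Hr Hs]]]]].
    by exists r, s, (DSW :: t); split=> //; split; [apply: path_sw Hr Hv | apply: path_sw Hs Hw].
  + move=> v w n m Hv Hw [r [s [t [Qrs [Hr Hs]]]]].
    exists r, s, (DDown :: t).
    by split=> //; split; [apply: path_down Hr Hv | apply: path_down Hs Hw].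
  + move=> v w n1 n2 m1 m2 Hv Hw [r [s [t [Qrs [Hr Hs]]]]].
    by exists r, s, (DSE :: t); split=> //; split; [apply: path_se Hr Hv | apply: path_se Hs Hw].
- move=> S QS [Hsw [Hd Hse]]; elim: Hx y Hy Qrs => {t x}.
  + by move=> n y Hy Qny; inversion Hy; subst; apply: QS.
  + move=> n tau m b _ IH Hm y Hy Qry.
    inversion Hy as [|? ? m' ? Hm' Em'| |]; subst; exact: Hd Hm Em' (IH _ Hm' Qry).
  + move=> n tau m m1 m2 _ IH Hm y Hy Qry.
    inversion Hy as [| |? ? m' ? ? Hm' Em'|]; subst; exact: Hsw Hm Em' (IH _ Hm' Qry).
  + move=> n tau m m1 m2 _ IH Hm y Hy Qry.
    inversion Hy as [| | |? ? m' ? ? Hm' Em']; subst; exact: Hse Hm Em' (IH _ Hm' Qry).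
Qed.

Lemma propagation_rule_bind (Q E : V -> V -> Prop) :
  acyclic G -> dominated G -> query G Q ->
  Defs.subrel (propagation G Q) E -> rule_bind G E -> homogeneous G E -> propagated G E ->
  Defs.equivalence_rel E -> rule_bind G (propagation G Q).
Proof.
move=> Hac Hdom HQ PE Eb Eh Ep [_ [Esym Etrans]] v w n m Hv Hw Pvw.
have Enm : E n m := Eb _ _ _ _ Hv Hw (PE _ _ Pvw).
have [r [s [t [Qrs [Hrv Hsw]]]]] := proj1 (propagationP Q v w) Pvw.
have [Hr Hs] := HQ _ _ Qrs.
have [a1 [t1 [Ht1 Hrn]]] := crosses_path (Hdom _ _ Hv _ _ Hr Hrv).
have [a2 [t2 [Ht2 Hsm]]] := crosses_path (Hdom _ _ Hw _ _ Hs Hsw).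
(* Compare the depths t1 and t2 at which the binders n and m are crossed. *)
rewrite Ht1 in Ht2; have [b [[_ Hb] | [_ Hb]]] := app_eq_app _ _ _ _ Ht2; subst.
- have [m' [Hsm' Hm'm]] := path_split Hsm.
  have Pnm' : propagation G Q n m' by apply/propagationP; exists r, s, t1.
  have Em'm : E m' m := Etrans _ _ _ (Esym _ _ (PE _ _ Pnm')) Enm.
  have b_nil := unrelated_descendant Hac Eh Ep Hm'm Em'm; subst b.
  by rewrite -(path_nil_eq Hm'm).
- have [n' [Hrn' Hn'n]] := path_split Hrn.
  have Pn'm : propagation G Q n' m by apply/propagationP; exists r, s, t2.
  have En'n : E n' n := Etrans _ _ _ (PE _ _ Pn'm) (Esym _ _ Enm).
  have b_nil := unrelated_descendant Hac Eh Ep Hn'n En'n; subst b.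
  by rewrite -(path_nil_eq Hn'n).
Qed.

End LambdaGraphs.

Theorem mainTheorem15 (V : finType) (A : Type) (G : graph V A)
  (HG : lambda_graph G) (Q : V -> V -> Prop) (HQ : query G Q) :
  (open_rel G (propagation G Q) /\ bisimulation G (propagation G Q)) <->
  sharing_equivalence G (spreading G Q).
Proof.
split.
- move=> /open_bisimulationP /compatible_eq_closure Hclos.
  have [_ [_ [Hprop _]]] := proj2 (open_bisimulationP G _) Hclos.
  have Hspread := spreading_eq_closure Hprop.
  have Hcompat x y : spreading G Q x y -> compatible G (spreading G Q) x y.
    move=> /Hspread /Hclos; apply: compatible_mono => u v; exact: (proj2 (Hspread u v)).
  have [Ho Hb] := proj2 (open_bisimulationP G _) Hcompat.
  by split=> //; split=> //; apply: spreading_equivalence.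
- move=> [Eo [[Eh [Ep Eb]] Eeq]]; have [_ [Hac Hdom]] := HG.
  have PE := @propagation_sub_spreading _ _ G Q.
  split; first by move=> n m a b Hn Hm /PE; apply: Eo Hn Hm.
  split; first by move=> n m /PE /Eh.
  split; first exact: propagation_propagated.
  exact: propagation_rule_bind Hac Hdom HQ PE Eb Eh Ep Eeq.
Qed.
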